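(* Let $\mathfrak g=\mathfrak k\oplus\mathfrak m$ be a Pauli-spanned Cartan decomposition and let $b_1,b_2,b_3\in\tilde{\mathfrak m}$ be pairwise commuting Pauli strings. If $\tilde{\mathfrak k}^{123}$ is non-empty, then the (Hermitian) Pauli string $b_1b_2b_3$ satisfies $i\,b_1b_2b_3\in\mathfrak m$.
   Context: Pauli strings on $n$ qubits are tensor products of $I,X,Y,Z$, not all identity; two Pauli strings either commute or anticommute. A Pauli-spanned Cartan decomposition is $\mathfrak g=\mathfrak k\oplus\mathfrak m\subseteq\mathfrak{su}(2^n)$ with $\mathfrak k=\mathrm{span}_{i\mathbb R}\tilde{\mathfrak k}$, $\mathfrak m=\mathrm{span}_{i\mathbb R}\tilde{\mathfrak m}$, where $\tilde{\mathfrak k}\sqcup\tilde{\mathfrak m}$ is the set of all Pauli strings (up to phase) $\sigma$ with $i\sigma\in\mathfrak g$, and $[\mathfrak k,\mathfrak k]\subseteq\mathfrak k$, $[\mathfrak m,\mathfrak m]\subseteq\mathfrak k$, $[\mathfrak k,\mathfrak m]\subseteq\mathfrak m$. $\tilde{\mathfrak k}^{123}$ is the set of $k\in\tilde{\mathfrak k}$ anticommuting with each of $b_1,b_2,b_3$. *)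

From mathcomp Require Import all_boot.
Set Implicit Arguments. Unset Strict Implicit. Unset Printing Implicit Defensive.

Inductive pauli := pI | pX | pY | pZ.

(* Product of single-qubit Paulis, up to a phase in {1,-1,i,-i}. *)
Definition pmul (a b : pauli) : pauli :=
  match a, b with
  | pI, c | c, pI => c
  | pX, pX | pY, pY | pZ, pZ => pI
  | pX, pY | pY, pX => pZ
  | pY, pZ | pZ, pY => pX
  | pZ, pX | pX, pZ => pY
  end.

Definition panti (a b : pauli) : bool :=
  match a, b with
  | pX, pY | pY, pX | pY, pZ | pZ, pY | pZ, pX | pX, pZ => true
  | _, _ => false
  end.

Definition pword (n : nat) := {ffun 'I_n -> pauli}.

Definition is_pstring n (s : pword n) : Prop := exists i, s i <> pI.

Definition smul n (s t : pword n) : pword n := [ffun i => pmul (s i) (t i)].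

(* Tensor products anticommute iff an odd number of tensor factors anticommute. *)
Definition anticommute n (s t : pword n) : bool :=
  odd #|[pred i | panti (s i) (t i)]|.

Definition pcommute n (s t : pword n) : bool := ~~ anticommute s t.

(* A Pauli-spanned Cartan decomposition g = k (+) m, given by the disjoint sets
   K = k~ and M = m~ of Pauli strings, k = span_{iR} K, m = span_{iR} M.
   For Pauli strings s, t: [i s, i t] = 0 if they commute, and is a nonzero real
   multiple of i (s t) if they anticommute. Since the Pauli strings are linearly
   independent, [k,k] <= k etc. are exactly the following closure conditions. *)
Definition pauli_cartan n (K M : pword n -> Prop) : Prop :=
  (forall s, K s -> is_pstring s) /\
  (forall s, M s -> is_pstring s) /\
  (forall s, K s -> M s -> False) /\
  (forall s t, K s -> K t -> anticommute s t -> K (smul s t)) /\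
  (forall s t, M s -> M t -> anticommute s t -> K (smul s t)) /\
  (forall s t, K s -> M t -> anticommute s t -> M (smul s t)).

Definition k123 n (K : pword n -> Prop) (b1 b2 b3 : pword n) (k : pword n) : Prop :=
  K k /\ anticommute k b1 /\ anticommute k b2 /\ anticommute k b3.

From mathcomp Require Import all_boot.
Set Implicit Arguments. Unset Strict Implicit. Unset Printing Implicit Defensive.

(* Up to phase, Pauli strings form the group F_2^(2n) and anticommutation is a
   bilinear form on it.  Starting from k in k~^123, the brackets
   k -> k b1 (in m) -> k b1 b2 (in k) -> k b1 b2 b3 (in m) are all legal, since
   the b_i commute pairwise and k anticommutes with each of them.  Finally k
   anticommutes with k b1 b2 b3 (three anticommuting factors), so bracketing
   once more with k lands in m, at k k b1 b2 b3 = b1 b2 b3. *)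

Lemma odd_card_predX (I : finType) (a b : pred I) :
  odd #|[pred i | a i (+) b i]| = odd #|a| (+) odd #|b|.
Proof.
have card_sum (c : pred I) : #|c| = \sum_i (c i : nat).
  by rewrite -sum1_card big_mkcond /=; apply: eq_bigr => i _; rewrite unfold_in.
have card_predX : #|[pred i | a i (+) b i]| + 2 * #|[pred i | a i && b i]| = #|a| + #|b|.
  rewrite !card_sum big_distrr -!big_split /=.
  by apply: eq_bigr => i _; case: (a i); case: (b i).
by move/(congr1 odd): card_predX; rewrite !oddD addKb addbF.
Qed.

Lemma panti_pmull (a b c : pauli) : panti (pmul a b) c = panti a c (+) panti b c.
Proof. by case: a; case: b; case: c. Qed.

Section AnticommuteForm.

Variable n : nat.
Implicit Types s t u : pword n.

Lemma anticommute_smull s t u :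
  anticommute (smul s t) u = anticommute s u (+) anticommute t u.
Proof.
rewrite /anticommute -odd_card_predX; congr (odd _); apply: eq_card => i.
by rewrite !inE ffunE panti_pmull.
Qed.

Lemma anticommuteC s t : anticommute s t = anticommute t s.
Proof.
by rewrite /anticommute; congr (odd _); apply: eq_card => i; rewrite !inE; case: (s i); case: (t i).
Qed.

Lemma anticommutexx s : anticommute s s = false.
Proof.
by rewrite /anticommute (@eq_card _ _ pred0) ?card0 // => i; rewrite !inE; case: (s i).
Qed.

Lemma smulKA s t u v : smul s (smul (smul (smul s t) u) v) = smul t (smul u v).
Proof.
by apply/ffunP => i; rewrite !ffunE; case: (s i); case: (t i); case: (u i); case: (v i).
Qed.

End AnticommuteForm.

Section PauliCartan.

Variables (n : nat) (K M : pword n -> Prop).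
Hypothesis cartan : pauli_cartan K M.

Lemma cartan_smulMM (s t : pword n) : M s -> M t -> anticommute s t -> K (smul s t).
Proof. by case: cartan => [_ [_ [_ [_ [mulMM _]]]]]; apply: mulMM. Qed.

Lemma cartan_smulKM (s t : pword n) : K s -> M t -> anticommute s t -> M (smul s t).
Proof. by case: cartan => [_ [_ [_ [_ [_ mulKM]]]]]; apply: mulKM. Qed.

End PauliCartan.

Theorem theoremC2 (n : nat) (K M : pword n -> Prop) :
  pauli_cartan K M ->
  forall b1 b2 b3 : pword n,
    M b1 -> M b2 -> M b3 ->
    pcommute b1 b2 -> pcommute b1 b3 -> pcommute b2 b3 ->
    (exists k, k123 K b1 b2 b3 k) ->
    M (smul b1 (smul b2 b3)).
Proof.
move=> cartan b1 b2 b3 Mb1 Mb2 Mb3 /negbTE c12 /negbTE c13 /negbTE c23.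
case=> k [Kk [a1 [a2 a3]]].
have Mkb1 : M (smul k b1) := cartan_smulKM cartan Kk Mb1 a1.
have Kkb12 : K (smul (smul k b1) b2).
  by apply: (cartan_smulMM cartan) => //; rewrite anticommute_smull a2 c12.
have Mkb123 : M (smul (smul (smul k b1) b2) b3).
  by apply: (cartan_smulKM cartan) => //; rewrite !anticommute_smull a3 c13 c23.
rewrite -(smulKA k); apply: (cartan_smulKM cartan) => //.
by rewrite !(anticommuteC k) !anticommute_smull anticommutexx -!(anticommuteC k) a1 a2 a3.
Qed.
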